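(* Let $k,m\in\mathbb{N}$ with $m<k\le 2m$ and $\gcd(2k+1,2(2m+1))=1$, and let $a>0$ satisfy $\frac{1}{4km+3k+m+1}\le\frac{a}{2k+1}\le\frac{1}{4km+k+3m+1}$. For $s=1,\dots,4m+1$ and $n=1,\dots,2k$, put $X_{sn}=\frac{s}{2(2m+1)}-\frac{n}{2k+1}$ and $\Phi_{sn}(0,0)=\sum_{l\in\mathbb{Z}}Q_2\big(2a(2m+1)(l+X_{sn})\big)$, where $Q_2(x)=(1-|x|)\chi_{[-1,1]}(x)$. Then $-1<X_{sn}<1$, $X_{sn}\neq0$, and $$\Phi_{sn}(0,0)=\begin{cases}\sum_{l=-1}^{0}Q_2\big(2a(2m+1)(l+X_{sn})\big), & 0<X_{sn}<1,\\ \sum_{l=0}^{1}Q_2\big(2a(2m+1)(l+X_{sn})\big), & -1<X_{sn}<0.\end{cases}$$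
   Context: This is the setting $ab=\frac{2k+1}{2(2m+1)}$ with $b$ in $\left[\frac{2k+1}{2}-\frac{k-m}{2(2m+1)},\frac{2k+1}{2}+\frac{k-m}{2(2m+1)}\right]$, rewritten as the stated range for $a$; $\Phi_{sn}(0,0)$ is the $(s,n)$ entry of the symbol matrix of the Gabor system of $Q_2$ at $(x,t)=(0,0)$. *)

From Stdlib Require Import Reals ZArith Arith.
From Coquelicot Require Import Coquelicot.
Open Scope R_scope.

Definition Q2 (x : R) : R :=
  if Rle_dec (Rabs x) 1 then 1 - Rabs x else 0.

(* Summation over Z: sum_{l in Z} f l converges to v, meaning the series over
   l >= 0 and over l <= -1 both converge and their sums add up to v. *)
Definition is_Zsum (f : Z -> R) (v : R) : Prop :=
  exists v1 v2 : R,
    is_series (fun j : nat => f (Z.of_nat j)) v1 /\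
    is_series (fun j : nat => f (- Z.of_nat (S j))%Z) v2 /\
    v = v1 + v2.

Definition Xsn (k m s n : nat) : R :=
  INR s / (2 * (2 * INR m + 1)) - INR n / (2 * INR k + 1).

Definition Phi_term (a : R) (k m s n : nat) (l : Z) : R :=
  Q2 (2 * a * (2 * INR m + 1) * (IZR l + Xsn k m s n)).

(** Since [a/(2k+1)] is at least [1/(4km+3k+m+1)] and [4km+3k+m+1 <= 2(2k+1)(2m+1)],
    the dilation factor [2a(2m+1)] is at least [1], so [Q_2(2a(2m+1) y)] vanishes as
    soon as [|y| >= 1].  The shifts [l + X_sn] with [|l + X_sn| < 1] are exactly the
    two integers adjacent to [-X_sn], because [X_sn] lies strictly between [-1] and
    [1] and is never an integer: [X_sn = 0] would force [2k+1] to divide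
    [2(2m+1) n], hence [n], by coprimality, which is impossible for [0 < n < 2k+1]. *)

From Stdlib Require Import Reals ZArith Arith Lra Lia.
From Coquelicot Require Import Coquelicot.
Open Scope R_scope.

Lemma is_series_finite_support (f : nat -> R) (N : nat) :
  (forall j, (N < j)%nat -> f j = 0) -> is_series f (sum_n f N).
Proof.
  intros Hf.
  apply filterlim_ext_loc with (fun _ => sum_n f N); [|apply filterlim_const].
  exists N. intros p Hp. induction Hp as [|p Hp IH]; [reflexivity|].
  rewrite sum_Sn, <- IH, Hf by lia. symmetry. apply (plus_zero_r (sum_n f N)).
Qed.

Lemma is_series_support_0 (f : nat -> R) :
  (forall j, (0 < j)%nat -> f j = 0) -> is_series f (f 0%nat).
Proof.
  intros Hf. replace (f 0%nat) with (sum_n f 0) by apply sum_O.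
  now apply is_series_finite_support.
Qed.

Lemma is_series_support_01 (f : nat -> R) :
  (forall j, (1 < j)%nat -> f j = 0) -> is_series f (f 0%nat + f 1%nat).
Proof.
  intros Hf. replace (f 0%nat + f 1%nat) with (sum_n f 1) by (rewrite sum_Sn, sum_O; reflexivity).
  now apply is_series_finite_support.
Qed.

Lemma is_Zsum_support_m1_0 (f : Z -> R) :
  (forall l, l <> (-1)%Z -> l <> 0%Z -> f l = 0) -> is_Zsum f (f (-1)%Z + f 0%Z).
Proof.
  intros Hf. exists (f 0%Z), (f (-1)%Z). split; [|split].
  - apply (is_series_support_0 (fun j => f (Z.of_nat j))). intros j Hj. apply Hf; lia.
  - apply (is_series_support_0 (fun j => f (- Z.of_nat (S j))%Z)). intros j Hj. apply Hf; lia.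
  - ring.
Qed.

Lemma is_Zsum_support_0_1 (f : Z -> R) :
  (forall l, l <> 0%Z -> l <> 1%Z -> f l = 0) -> is_Zsum f (f 0%Z + f 1%Z).
Proof.
  intros Hf. exists (f 0%Z + f 1%Z), (f (-1)%Z). split; [|split].
  - apply (is_series_support_01 (fun j => f (Z.of_nat j))). intros j Hj. apply Hf; lia.
  - apply (is_series_support_0 (fun j => f (- Z.of_nat (S j))%Z)). intros j Hj. apply Hf; lia.
  - rewrite (Hf (-1)%Z) by lia. ring.
Qed.

Lemma Q2_scale_eq0 (c y : R) : 1 <= c -> 1 <= Rabs y -> Q2 (c * y) = 0.
Proof.
  intros Hc Hy. unfold Q2.
  rewrite Rabs_mult, (Rabs_right c) by lra.
  destruct (Rle_dec (c * Rabs y) 1); nra.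
Qed.

Lemma Rabs_shift_ge1_pos (X : R) (l : Z) :
  0 < X < 1 -> l <> (-1)%Z -> l <> 0%Z -> 1 <= Rabs (IZR l + X).
Proof.
  intros HX Hl1 Hl0.
  destruct (Z_le_gt_dec 1 l) as [Hl | Hl].
  - apply IZR_le in Hl. rewrite Rabs_right; lra.
  - assert (Hl' : (l <= -2)%Z) by lia. apply IZR_le in Hl'.
    rewrite Rabs_left; lra.
Qed.

Lemma Rabs_shift_ge1_neg (X : R) (l : Z) :
  -1 < X < 0 -> l <> 0%Z -> l <> 1%Z -> 1 <= Rabs (IZR l + X).
Proof.
  intros HX Hl0 Hl1.
  replace (IZR l + X) with (IZR (l - 1) + (X + 1)) by (rewrite minus_IZR; ring).
  apply Rabs_shift_ge1_pos; [lra | lia | lia].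
Qed.

Lemma INR_div_in_unit (i : nat) (d : R) : (1 <= i)%nat -> INR i < d -> 0 < INR i / d < 1.
Proof.
  intros Hi Hd. apply (le_INR 1) in Hi. simpl in Hi.
  split.
  - apply Rdiv_lt_0_compat; lra.
  - apply Rlt_div_l; lra.
Qed.

Lemma Xsn_bounds (k m s n : nat) :
  (1 <= s <= 4 * m + 1)%nat -> (1 <= n <= 2 * k)%nat -> -1 < Xsn k m s n < 1.
Proof.
  intros Hs Hn.
  assert (Hu : 0 < INR s / (2 * (2 * INR m + 1)) < 1).
  { apply INR_div_in_unit; [lia|].
    assert (Hlt : (s < 2 * (2 * m + 1))%nat) by lia.
    apply lt_INR in Hlt. rewrite mult_INR, plus_INR, mult_INR in Hlt. simpl in Hlt. lra. }
  assert (Hv : 0 < INR n / (2 * INR k + 1) < 1).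
  { apply INR_div_in_unit; [lia|].
    assert (Hlt : (n < 2 * k + 1)%nat) by lia.
    apply lt_INR in Hlt. rewrite plus_INR, mult_INR in Hlt. simpl in Hlt. lra. }
  unfold Xsn. lra.
Qed.

Lemma Xsn_neq0 (k m s n : nat) :
  Nat.gcd (2 * k + 1) (2 * (2 * m + 1)) = 1%nat -> (1 <= n <= 2 * k)%nat ->
  Xsn k m s n <> 0.
Proof.
  intros Hgcd Hn HX.
  assert (HM : 0 < 2 * INR m + 1) by (pose proof (pos_INR m); lra).
  assert (HK : 0 < 2 * INR k + 1) by (pose proof (pos_INR k); lra).
  assert (Hcross_R : INR s * (2 * INR k + 1) - 2 * (2 * INR m + 1) * INR n = 0).
  { replace (INR s * (2 * INR k + 1) - 2 * (2 * INR m + 1) * INR n)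
      with (Xsn k m s n * (2 * (2 * INR m + 1)) * (2 * INR k + 1))
      by (unfold Xsn; field; lra).
    rewrite HX. ring. }
  assert (Hcross : (s * (2 * k + 1) = 2 * (2 * m + 1) * n)%nat).
  { apply INR_eq. rewrite !mult_INR, !plus_INR, !mult_INR. simpl. lra. }
  assert (Hdvd : Nat.divide (2 * k + 1) n).
  { apply (Nat.gauss _ (2 * (2 * m + 1))); [|exact Hgcd].
    exists s. symmetry. exact Hcross. }
  destruct Hdvd as [[|q] Hq]; lia.
Qed.

Lemma dilation_ge1 (K M a : R) :
  0 <= K -> 0 <= M ->
  1 / (4 * K * M + 3 * K + M + 1) <= a / (2 * K + 1) -> 1 <= 2 * a * (2 * M + 1).
Proof.
  intros HK HM Hlo.
  set (D := 4 * K * M + 3 * K + M + 1) in Hlo.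
  assert (HD : 0 < D) by (unfold D; nra).
  assert (Hq : (2 * K + 1) / D <= a).
  { apply Rmult_le_compat_r with (r := 2 * K + 1) in Hlo; [|lra].
    replace (a / (2 * K + 1) * (2 * K + 1)) with a in Hlo by (field; lra).
    replace ((2 * K + 1) / D) with (1 / D * (2 * K + 1)) by (field; lra).
    exact Hlo. }
  assert (Hsize : D <= 2 * (2 * M + 1) * (2 * K + 1)) by (unfold D; nra).
  assert (Hq1 : 1 <= 2 * (2 * M + 1) * ((2 * K + 1) / D)).
  { replace (2 * (2 * M + 1) * ((2 * K + 1) / D)) with (2 * (2 * M + 1) * (2 * K + 1) / D)
      by (field; lra).
    apply Rle_div_r; lra. }
  nra.
Qed.

Theorem lemma3p1 (k m : nat) (a : R)
  (Hmk : (m < k)%nat) (Hkm : (k <= 2 * m)%nat)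
  (Hgcd : Nat.gcd (2 * k + 1) (2 * (2 * m + 1)) = 1%nat)
  (Ha : 0 < a)
  (Hlo : 1 / (4 * INR k * INR m + 3 * INR k + INR m + 1) <= a / (2 * INR k + 1))
  (Hhi : a / (2 * INR k + 1) <= 1 / (4 * INR k * INR m + INR k + 3 * INR m + 1))
  (s n : nat) (Hs : (1 <= s <= 4 * m + 1)%nat) (Hn : (1 <= n <= 2 * k)%nat) :
  -1 < Xsn k m s n < 1 /\ Xsn k m s n <> 0 /\
  (0 < Xsn k m s n ->
     is_Zsum (Phi_term a k m s n)
       (Phi_term a k m s n (-1)%Z + Phi_term a k m s n 0%Z)) /\
  (Xsn k m s n < 0 ->
     is_Zsum (Phi_term a k m s n)
       (Phi_term a k m s n 0%Z + Phi_term a k m s n 1%Z)).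
Proof.
  pose proof (Xsn_bounds k m s n Hs Hn) as HX.
  pose proof (dilation_ge1 _ _ a (pos_INR k) (pos_INR m) Hlo) as Hc.
  split; [exact HX | split; [exact (Xsn_neq0 k m s n Hgcd Hn) | split]].
  - intros Hpos. apply is_Zsum_support_m1_0. intros l Hl1 Hl0.
    apply Q2_scale_eq0; [exact Hc|]. apply Rabs_shift_ge1_pos; [lra | exact Hl1 | exact Hl0].
  - intros Hneg. apply is_Zsum_support_0_1. intros l Hl0 Hl1.
    apply Q2_scale_eq0; [exact Hc|]. apply Rabs_shift_ge1_neg; [lra | exact Hl0 | exact Hl1].
Qed.
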